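(* Every signed digraph $G$ on $[n]$ admits a nilpotent function $f:\{0,1,2,3\}^n\to\{0,1,2,3\}^n$ of class at most $2$.
   Context: A signed digraph is a digraph (loops allowed, no multiple arcs) in which each arc is labeled positive, negative, or null (unsigned). For a finite interval of integers $A$, a function over $A$ is a map $f:A^n\to A^n$; $f^0=\mathrm{id}$, $f^k=f\circ f^{k-1}$. The interaction graph $G(f)$ is the signed digraph on $[n]$ with an arc $(j,i)$ iff $f_i(a)\neq f_i(b)$ for some $a,b\in A^n$ with $a_j<b_j$ and $a_\ell=b_\ell$ for $\ell\neq j$; the arc is positive if $f_i(a)\leq f_i(b)$ for all such pairs, negative if $f_i(a)\geq f_i(b)$ for all such pairs, and null otherwise. $G$ admits $f$ if $G(f)=G$. $f$ is nilpotent if $f^k$ is constant for some $k\geq 0$; the least such $k$ is its class. *)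

From mathcomp Require Import all_boot.
Set Implicit Arguments. Unset Strict Implicit. Unset Printing Implicit Defensive.

Inductive sign := Pos | Neg | Null.

(* A signed digraph on [n] = 'I_n (loops allowed, no multiple arcs):
   G j i = None      : no arc (j,i);
   G j i = Some s    : arc (j,i) with label s. *)
Definition signed_digraph (n : nat) := 'I_n -> 'I_n -> option sign.

Definition config (m n : nat) := {ffun 'I_n -> 'I_m}.

Definition jstep (m n : nat) (j : 'I_n) (a b : config m n) : bool :=
  (a j < b j) && [forall l : 'I_n, (l != j) ==> (a l == b l)].

Definition interaction_graph (m n : nat) (f : config m n -> config m n)
  : signed_digraph n :=
  fun j i =>
    if [exists a : config m n, exists b : config m n,
          jstep j a b && (f a i != f b i)] then
      if [forall a : config m n, forall b : config m n,
            jstep j a b ==> (f a i <= f b i)] then Some Pos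
      else if [forall a : config m n, forall b : config m n,
            jstep j a b ==> (f b i <= f a i)] then Some Neg
      else Some Null
    else None.

Definition admits (m n : nat) (G : signed_digraph n) (f : config m n -> config m n) :=
  forall j i, interaction_graph f j i = G j i.

Definition nilpotent_class_le (m n : nat) (f : config m n -> config m n) (k : nat) :=
  exists k', k' <= k /\ exists c : config m n, forall x, iter k' f x = c.

From mathcomp Require Import all_boot.
Set Implicit Arguments. Unset Strict Implicit. Unset Printing Implicit Defensive.

(** Let [f_i(x) = 1] if [x_k ∈ P_(k,i)] for some [k], and [f_i(x) = 0]
   otherwise, where each set [P_(k,i) ⊆ {0,1,2,3}] misses some value.
   Pinning every other coordinate to a missed value shows that the arc
   [(j,i)] of [G(f)] and its sign are those of the indicator of [P_(j,i)]
   along [{0,1,2,3}]; the sets [{3}], [{0,1,2}], [{2}] and [∅] give a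
   positive, negative, null and absent arc. Since [f] only takes the values
   0 and 1, on which each of these sets is constant, [f ∘ f] is constant. *)

Lemma negb_forall2_imply (T U : finType) (p q : T -> U -> bool) :
  ~~ [forall x, forall y, p x y ==> q x y] = [exists x, exists y, p x y && ~~ q x y].
Proof.
rewrite negb_forall; apply: eq_existsb => x.
by rewrite negb_forall; apply: eq_existsb => y; rewrite negb_imply.
Qed.

Lemma jstepP m n (j : 'I_n) (a b : config m n) :
  jstep j a b -> a j < b j /\ forall l, l != j -> a l = b l.
Proof.
case/andP=> ab /forallP same; split=> // l lj.
by apply/eqP; exact: implyP (same l) lj.
Qed.

Lemma forall_ltP m (q : 'I_m -> 'I_m -> bool) :
  reflect (forall u v : 'I_m, u < v -> q u v)
    [forall u : 'I_m, forall v : 'I_m, (u < v) ==> q u v].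
Proof.
apply: (iffP forallP) => [lt_q u v uv | lt_q u].
  exact: implyP (forallP (lt_q u) v) uv.
by apply/forallP => v; apply/implyP; exact: lt_q.
Qed.

Definition pred_sign m (p : pred 'I_m) : option sign :=
  if [exists u : 'I_m, exists v : 'I_m, (u < v) && (p u != p v)] then
    if [forall u : 'I_m, forall v : 'I_m, (u < v) ==> (p u ==> p v)] then Some Pos
    else if [forall u : 'I_m, forall v : 'I_m, (u < v) ==> (p v ==> p u)] then Some Neg
    else Some Null
  else None.

Section OrNetwork.

Variables (m n : nat) (lo hi : 'I_m).
Hypothesis lo_lt_hi : lo < hi.
Variable P : 'I_n -> 'I_n -> pred 'I_m.

Definition level (b : bool) : 'I_m := if b then hi else lo.

Definition or_network (x : config m n) : config m n :=
  [ffun i => level [exists k, P k i (x k)]].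

Lemma eq_level b c : (level b == level c) = (b == c).
Proof.
by case: b; case: c; rewrite /level ?eqxx //= -val_eqE ?(ltn_eqF lo_lt_hi) ?(gtn_eqF lo_lt_hi).
Qed.

Lemma leq_level b c : (level b <= level c) = (b ==> c).
Proof. by case: b; case: c; rewrite /= ?leqnn ?(ltnW lo_lt_hi) // leqNgt lo_lt_hi. Qed.

Lemma or_network_split j (x : config m n) i :
  or_network x i = level (P j i (x j) || [exists (k | k != j), P k i (x k)]).
Proof.
rewrite ffunE; congr level; apply/existsP/orP => [[k Pk] | [Pj | /existsP [k /andP [_ Pk]]]].
- by case: (eqVneq k j) => [<- | kj]; [left | right; apply/existsP; exists k; rewrite kj].
- by exists j.
- by exists k.
Qed.

Hypothesis P_falsifiable : forall k i, exists v, ~~ P k i v.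

(* Pinning all coordinates but [j] to values outside [P _ i] makes
   [or_network _ i] a function of [x_j] alone, namely [level (P j i x_j)]. *)
Lemma or_network_jstep (R : rel 'I_m) (S : rel bool) j i :
  reflexive R -> (forall b c, R (level b) (level c) = S b c) ->
  [forall a, forall b, jstep j a b ==> R (or_network a i) (or_network b i)]
  = [forall u : 'I_m, forall v : 'I_m, (u < v) ==> S (P j i u) (P j i v)].
Proof.
move=> reflR RS; apply/forallP/forall_ltP => [net_jstep u v uv | pred_lt a].
  have [z Pz] := fin_all_exists (fun k => P_falsifiable k i).
  pose pin w : config m n := [ffun k => if k == j then w else z k].
  have pinE w : or_network (pin w) i = level (P j i w).
    rewrite (or_network_split j) ffunE eqxx; congr level.
    suff -> : [exists (k | k != j), P k i (pin w k)] = false by rewrite orbF.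
    apply/negbTE; rewrite negb_exists; apply/forallP => k.
    by rewrite ffunE negb_and; case: eqP => //= _; exact: Pz.
  have jstep_pin : jstep j (pin u) (pin v).
    rewrite /jstep !ffunE eqxx uv; apply/forallP => l; rewrite !ffunE.
    by case: (l == j); rewrite ?eqxx.
  by rewrite -RS -!pinE; exact: implyP (forallP (net_jstep (pin u)) (pin v)) jstep_pin.
apply/forallP => b; apply/implyP => /jstepP [ab same].
rewrite !(or_network_split j).
have -> : [exists (k | k != j), P k i (a k)] = [exists (k | k != j), P k i (b k)].
  by apply: eq_existsb => k; case: (eqVneq k j) => // kj; rewrite same.
case: [exists (k | k != j), P k i (b k)]; rewrite ?orbT ?orbF //.
by rewrite RS; exact: pred_lt.
Qed.

Lemma interaction_graph_or_network j i :
  interaction_graph or_network j i = pred_sign (P j i).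
Proof.
have changes : [exists a, exists b, jstep j a b && (or_network a i != or_network b i)]
    = [exists u : 'I_m, exists v : 'I_m, (u < v) && (P j i u != P j i v)].
  by rewrite -!negb_forall2_imply (or_network_jstep j i (@eqxx _) eq_level).
have geq_level b c : (level c <= level b) = (c ==> b) by exact: leq_level.
rewrite /interaction_graph /pred_sign changes.
rewrite (@or_network_jstep (fun x y : 'I_m => x <= y) (fun b c => b ==> c) j i leqnn leq_level).
by rewrite (@or_network_jstep (fun x y : 'I_m => y <= x) (fun b c => c ==> b) j i leqnn geq_level).
Qed.

End OrNetwork.

Lemma or_network_nilpotent m n (lo hi : 'I_m) (P : 'I_n -> 'I_n -> pred 'I_m) :
  (forall k i, P k i lo = P k i hi) -> nilpotent_class_le (or_network lo hi P) 2.
Proof.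
move=> P_lo_hi; exists 2; split=> //.
exists [ffun i => level lo hi [exists k, P k i lo]] => x /=.
apply/ffunP => i; rewrite !ffunE; congr level; apply: eq_existsb => k.
by rewrite ffunE /level; case: ifP.
Qed.

Definition sign_pred (o : option sign) : pred 'I_4 :=
  match o with
  | None => pred0
  | Some Pos => fun v => 3 <= v
  | Some Neg => fun v => v < 3
  | Some Null => fun v => v == 2 :> nat
  end.

Lemma sign_predK o : pred_sign (sign_pred o) = o.
Proof.
pose w0 := @Ordinal 4 0 isT; pose w2 := @Ordinal 4 2 isT; pose w3 := @Ordinal 4 3 isT.
have changes (p : pred 'I_4) (u v : 'I_4) : u < v -> p u != p v ->
    [exists u : 'I_4, exists v : 'I_4, (u < v) && (p u != p v)].
  by move=> uv puv; apply/existsP; exists u; apply/existsP; exists v; rewrite uv.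
rewrite /pred_sign; case: o => [[]|] /=.
- rewrite (changes _ w0 w3) // (introT (forall_ltP _)) // => u v uv.
  by apply/implyP => /leq_trans; apply; exact: ltnW.
- rewrite (changes _ w0 w3) // (introF (forall_ltP _)) => [|/(_ w0 w3 isT)//].
  rewrite (introT (forall_ltP _)) // => u v uv.
  by apply/implyP; exact: ltn_trans.
- rewrite (changes _ w0 w2) // (introF (forall_ltP _)) => [|/(_ w2 w3 isT)//].
  by rewrite (introF (forall_ltP _)) => [|/(_ w0 w2 isT)].
- by case: existsP => // -[u /existsP [v]]; rewrite andbF.
Qed.

Lemma sign_pred_falsifiable o : exists v, ~~ sign_pred o v.
Proof.
by exists (if o is Some Neg then @Ordinal 4 3 isT else @Ordinal 4 0 isT); case: o => [[]|].
Qed.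

Theorem proposition4 (n : nat) (G : signed_digraph n) :
  exists f : config 4 n -> config 4 n, admits G f /\ nilpotent_class_le f 2.
Proof.
pose P k i := sign_pred (G k i).
exists (or_network (@Ordinal 4 0 isT) (@Ordinal 4 1 isT) P); split.
  move=> j i; rewrite interaction_graph_or_network ?sign_predK // => k i'.
  exact: sign_pred_falsifiable.
by apply: or_network_nilpotent => k i; rewrite /P; case: (G k i) => [[]|].
Qed.
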